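(* Let $X\subset Y$ be cubical sets in $\mathbb{R}^d$. Assume there exists a cubical set $Z=\bigcup_{i=1}^m Q_i$, where each $Q_i$ is an elementary cube with $\dim Q_i=d$, such that $Y\setminus X\subset Z$. Then $$\#Y-\#X\le 3^d|Z|,$$ where $|Z|$ is the Lebesgue measure of $Z$.
   Context: An elementary interval is $[l,l+1]$ or $[l]=[l,l]$ with $l\in\mathbb{Z}$; an elementary cube in $\mathbb{R}^d$ is a product of $d$ elementary intervals, and its dimension is the number of nondegenerate factors. A cubical set is a union of elementary cubes. For a cubical set $X$, $\#X$ denotes the number of elementary cubes (of all dimensions) contained in $X$. *)

From HB Require Import structures.
From mathcomp Require Import all_boot all_order all_algebra.
From mathcomp Require Import all_classical all_reals all_analysis.
From mathcomp Require Import finmap.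
Set Implicit Arguments. Unset Strict Implicit. Unset Printing Implicit Defensive.
Import Order.TTheory GRing.Theory Num.Theory.
Local Open Scope classical_set_scope.
Local Open Scope ring_scope.

(* An elementary interval is encoded by (l, b) : int * bool:
   b = true  gives [l, l+1],  b = false gives [l] = [l, l]. *)
Definition elem_interval_set (R : realType) (I : int * bool) : set R :=
  [set x | I.1%:~R <= x <= (I.1 + (I.2 : nat)%:Z)%:~R].

Definition cube (d : nat) := {ffun 'I_d -> int * bool}.

Definition cube_set (R : realType) (d : nat) (Q : cube d) : set ('I_d -> R) :=
  [set x | forall i : 'I_d, @elem_interval_set R (Q i) (x i)].

Definition cube_dim (d : nat) (Q : cube d) : nat := #|[set i | (Q i).2]|.

Definition cubes_union (R : realType) (d : nat) (s : seq (cube d)) : set ('I_d -> R) :=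
  [set x | exists2 Q, Q \in s & @cube_set R d Q x].

Definition cubical (R : realType) (d : nat) (X : set ('I_d -> R)) : Prop :=
  exists s : seq (cube d), X = @cubes_union R d s.

(* #X : number of elementary cubes contained in X (finite for cubical X) *)
Definition ncubes (R : realType) (d : nat) (X : set ('I_d -> R)) : nat :=
  #|` fset_set [set Q : cube d | @cube_set R d Q `<=` X] |.

Definition box_set (R : realType) (d : nat) (B : ('I_d -> R) * ('I_d -> R)) : set ('I_d -> R) :=
  [set x | forall i, B.1 i <= x i <= B.2 i].

Definition box_vol (R : realType) (d : nat) (B : ('I_d -> R) * ('I_d -> R)) : R :=
  \prod_(i < d) Num.max (B.2 i - B.1 i) 0.

Definition lebesgue_outer (R : realType) (d : nat) (A : set ('I_d -> R)) : \bar R :=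
  ereal_inf [set (\sum_(0 <= k <oo) (box_vol (B k))%:E)%E |
             B in [set B : nat -> ('I_d -> R) * ('I_d -> R) |
                   A `<=` \bigcup_k box_set (B k)]].

From HB Require Import structures.
From mathcomp Require Import all_boot all_order all_algebra.
From mathcomp Require Import all_classical all_reals all_analysis.
From mathcomp Require Import finmap.
From mathcomp Require Import zify ring lra.
Set Implicit Arguments. Unset Strict Implicit. Unset Printing Implicit Defensive.
Import Order.TTheory GRing.Theory Num.Theory.
Import numFieldTopology.Exports ArrowAsProduct.
Local Open Scope classical_set_scope.
Local Open Scope ring_scope.

(* Every elementary cube Q has a point, its centre, in its relative interior,
   and an elementary cube containing the centre of Q contains Q and has Q among
   its at most 3^d faces (the faces of an interval are the interval and its two
   endpoints).  Hence a cube of Y not contained in X is a face of one of the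
   cubes Q_i, which gives #Y - #X <= 3^d m for the number m of distinct Q_i.
   Conversely |Z| >= m: the m distinct unit cubes have disjoint interiors and
   each contains N^d points of the grid of mesh 1/N, whereas a box with sides
   s_i contains at most prod_i (N s_i + 1) of them; by compactness a countable
   box cover of Z may be slightly enlarged and reduced to a finite one, and
   letting N grow gives the volume bound. *)

Section Faces.
Variable R : realType.

Definition interval_center (I : int * bool) : R :=
  I.1%:~R + (if I.2 then 2^-1 else 0).

Definition interval_faces (I : int * bool) : seq (int * bool) :=
  [:: I; (I.1, false); (I.1 + 1, false)].

Lemma interval_center_mem (I : int * bool) :
  @elem_interval_set R I (interval_center I).
Proof.
case: I => l [] /=; rewrite /elem_interval_set /interval_center /= ?addr0 ?lexx //.
by rewrite intrD; apply/andP; split; lra.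
Qed.

Lemma interval_mem_faces_of_center (I J : int * bool) :
  @elem_interval_set R J (interval_center I) ->
  @elem_interval_set R I `<=` @elem_interval_set R J /\ I \in interval_faces J.
Proof.
case: I J => l [] [l' b']; rewrite /elem_interval_set /interval_center /=.
  move=> /andP[lo hi].
  have : (l'%:~R : R) < (l + 1)%:~R by rewrite intrD; lra.
  have : (l%:~R : R) < (l' + b')%:~R by lra.
  rewrite !ltr_int => hl' hl.
  have [-> ->] : l = l' /\ b' = true by case: b' {lo hi} hl hl'; lia.
  by split; rewrite ?inE ?eqxx.
rewrite addr0 => /andP[lo hi]; split.
  by move=> x /=; rewrite addr0 => /andP[lx xl]; rewrite (le_trans lo lx) (le_trans xl hi).
move: lo hi; rewrite /interval_faces !inE !xpair_eqE !ler_int !andbT.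
by case: b' => /= lo hi; lia.
Qed.

Variable d : nat.
Local Notation cube_set := (@cube_set R d).
Local Notation cubes_union := (@cubes_union R d).

Definition center (Q : cube d) : 'I_d -> R := fun i => interval_center (Q i).

Lemma center_mem (Q : cube d) : cube_set Q (center Q).
Proof. by move=> i; apply: interval_center_mem. Qed.

(* Contains repetitions when [Q] is degenerate, so [size (faces Q)] is only an
   upper bound for the number of faces. *)
Definition faces (Q : cube d) : seq (cube d) :=
  [seq [ffun i => nth (Q i) (interval_faces (Q i)) (c i)] | c : {ffun 'I_d -> 'I_3}].

Lemma size_faces (Q : cube d) : size (faces Q) = (3 ^ d)%N.
Proof. by rewrite size_image card_ffun !card_ord. Qed.

Lemma mem_faces (Q Q' : cube d) :
  (forall i, Q i \in interval_faces (Q' i)) -> Q \in faces Q'.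
Proof.
move=> QQ'; apply/mapP.
exists [ffun i => inord (index (Q i) (interval_faces (Q' i)))]; first by rewrite mem_enum.
by apply/ffunP => i; rewrite !ffunE inordK ?nth_index ?(index_mem _ (interval_faces _)).
Qed.

Lemma cube_mem_faces_of_center (Q Q' : cube d) : cube_set Q' (center Q) ->
  cube_set Q `<=` cube_set Q' /\ Q \in faces Q'.
Proof.
move=> QQ'; have QQ'i i := interval_mem_faces_of_center (QQ' i).
by split; [move=> x Qx i; apply: (QQ'i i).1 | apply: mem_faces => i; apply: (QQ'i i).2].
Qed.

Lemma cube_sub_cubes_union (s : seq (cube d)) (Q : cube d) :
  cube_set Q `<=` cubes_union s <-> cubes_union s (center Q).
Proof.
split=> [/(_ _ (center_mem Q)) // | [Q' Q's /cube_mem_faces_of_center [QQ' _]] x Qx].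
by exists Q'; last exact: QQ'.
Qed.

Lemma mem_faces_of_center (s : seq (cube d)) (Q : cube d) :
  cubes_union s (center Q) -> Q \in flatten [seq faces Q' | Q' <- s].
Proof.
by move=> [Q' Q's /cube_mem_faces_of_center [_ QQ']]; apply/flatten_mapP; exists Q'.
Qed.

Lemma size_flatten_faces (s : seq (cube d)) :
  size (flatten [seq faces Q | Q <- s]) = (size s * 3 ^ d)%N.
Proof. by elim: s => //= Q s IH; rewrite size_cat IH size_faces mulSn. Qed.

Definition cubes_in (X : set ('I_d -> R)) := [set Q : cube d | cube_set Q `<=` X].

Lemma finite_cubes_in (X : set ('I_d -> R)) : cubical X -> finite_set (cubes_in X).
Proof.
move=> [s ->]; apply: sub_finite_set (finite_seq (flatten [seq faces Q | Q <- s])).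
by move=> Q QX; apply: mem_faces_of_center; apply/cube_sub_cubes_union.
Qed.

End Faces.

Lemma card_fset_set_le_setU (T : choiceType) (A B : set T) (s : seq T) :
  finite_set B -> A `<=` B `|` [set` s] ->
  (#|` fset_set A| <= #|` fset_set B| + size s)%N.
Proof.
move=> finB AB; have fins := finite_seq s.
have finBs : finite_set (B `|` [set` s]) by rewrite finite_setU.
have /fsubset_leq_card/leq_trans->// : (fset_set A `<=` fset_set (B `|` [set` s]))%fset.
  by rewrite -fset_set_sub //; apply: sub_finite_set finBs.
rewrite fset_setU //; apply: leq_trans (leq_card_fsetU _ _).1 _; rewrite leq_add2l.
have -> : [set` s] = [set` [fset x in s]%fset] by apply/seteqP; split=> x /=; rewrite inE.
by rewrite set_fsetK card_fseq size_undup.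
Qed.

Lemma ncubes_diff_le (R : realType) (d : nat) (X Y : set ('I_d -> R)) (s : seq (cube d)) :
  cubical X -> cubical Y -> Y `\` X `<=` cubes_union s ->
  (ncubes Y <= ncubes X + size s * 3 ^ d)%N.
Proof.
move=> cX cY YXs; rewrite -size_flatten_faces.
apply: card_fset_set_le_setU; first exact: finite_cubes_in.
move=> Q QY; have [s' eX] := cX.
have [Xc|nXc] := pselect (X (center R Q)).
  by left; rewrite /cubes_in /= eX; apply/cube_sub_cubes_union; rewrite -eX.
by right; apply: mem_faces_of_center; apply: YXs; split=> //; apply: QY; apply: center_mem.
Qed.

Lemma prod_perturb_le (R : realFieldType) (I : Type) (r : seq I) (L : I -> R) (t : R) :
  (forall i, 0 <= L i) -> 0 <= t <= 1 ->
  \prod_(i <- r) (L i + t) <= \prod_(i <- r) L i + t * \prod_(i <- r) (L i + 2).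
Proof.
move=> L0 /andP[t0 t1]; elim: r => [|a r IH]; first by rewrite !big_nil; lra.
rewrite !big_cons; set P := \prod_(i <- r) (L i + t) in IH *.
set P0 := \prod_(i <- r) L i in IH *; set C := \prod_(i <- r) (L i + 2) in IH *.
have P00 : 0 <= P0 by apply: prodr_ge0.
have P0C : P0 <= C by apply: ler_prod => i _; have := L0 i; rewrite L0; lra.
have La0 := L0 a; have C0 : 0 <= C by apply: le_trans P0C.
have : (L a + t) * P <= (L a + t) * (P0 + t * C) by rewrite ler_wpM2l //; lra.
have : t * P0 <= t * C by rewrite ler_wpM2l.
have : t * t * C <= t * C by rewrite ler_wpM2r // ler_piMl.
nra.
Qed.

Lemma sum_indicator_nat_itv (R : pzSemiRingType) (n a b : nat) :
  \sum_(t < n) ((a <= t < b)%N : bool)%:R = (minn n b - a)%:R :> R.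
Proof.
elim: n => [|n IH]; first by rewrite big_ord0 min0n.
rewrite big_ord_recr /= IH -natrD; congr _%:R.
by case: (ltnP n b); case: (leqP a n) => /=; lia.
Qed.

Lemma sum_indicator_segment (R : realFieldType) (n : nat) (x y : R) :
  \sum_(t < n) ((x <= t%:R <= y)%R : bool)%:R <= Num.max (y - x + 1) 0.
Proof.
elim: n y => [|n IH] y; first by rewrite big_ord0 le_max lexx orbT.
rewrite big_ord_recr /=; case: (boolP (x <= n%:R <= y)) => [/andP[xn ny]|_]; last first.
  by rewrite addr0.
have -> : \sum_(t < n) ((x <= t%:R <= y)%R : bool)%:R =
           \sum_(t < n) ((x <= t%:R <= y - 1)%R : bool)%:R :> R.
  apply: eq_bigr => t _; have : (t%:R : R) + 1 <= n%:R by rewrite natr1 ler_nat.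
  by move=> tn; have -> : (t%:R <= y) = (t%:R <= y - 1) by apply/idP/idP; lra.
by have := IH (y - 1); rewrite !max_l /= ?mulr1n; lra.
Qed.

Lemma ltr_nat_addhalf (R : realFieldType) (a t : nat) :
  ((a%:R : R) < t%:R + 2^-1) = (a <= t)%N.
Proof.
apply/idP/idP => h.
  have : (a%:R : R) < t.+1%:R by rewrite -natr1; lra.
  by rewrite ltr_nat.
have : (a%:R : R) <= t%:R by rewrite ler_nat.
lra.
Qed.

Lemma ltr_addhalf_nat (R : realFieldType) (t b : nat) :
  (t%:R + 2^-1 < (b%:R : R)) = (t < b)%N.
Proof.
apply/idP/idP => h.
  have : (t%:R : R) < b%:R by lra.
  by rewrite ltr_nat.
have : (t.+1%:R : R) <= b%:R by rewrite ler_nat.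
rewrite -natr1; lra.
Qed.

Section Grid.
Variables (R : realFieldType) (N A : nat).
Hypothesis N_gt0 : (0 < N)%N.

(* Centres of the cells of the grid of mesh 1/N, shifted by -A so that the
   first 2AN of them cover the segment [-A, A]. *)
Definition grid_pt (t : nat) : R := (t%:R + 2^-1) / N%:R - A%:R.

Let N_gt0R : (0 : R) < N%:R. Proof. by rewrite ltr0n. Qed.

Lemma sum_grid_open_unit (l : int) : (`|l| + 1 <= A)%N ->
  \sum_(t < 2 * A * N) ((l%:~R < grid_pt t < l%:~R + 1)%R : bool)%:R = N%:R :> R.
Proof.
move=> lA; pose u := absz (l + A%:Z).
have uE : u%:Z = l + A%:Z by rewrite /u gez0_abs; lia.
have lE : (l%:~R : R) = u%:R - A%:R by rewrite -[u%:R]/((u%:Z)%:~R) uE intrD addrK.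
rewrite (eq_bigr (fun t : 'I_ _ => ((u * N <= t < u * N + N)%N : bool)%:R)).
  rewrite sum_indicator_nat_itv; congr _%:R.
  have : (u + 1 <= 2 * A)%N by lia.
  nia.
move=> t _; rewrite /grid_pt lE ltrD2r addrAC ltrD2r.
rewrite ltr_pdivlMr // ltr_pdivrMr // -natrM natr1 -natrM.
by rewrite [(u.+1 * N)%N]mulSn [(N + _)%N]addnC ltr_nat_addhalf ltr_addhalf_nat.
Qed.

Lemma sum_grid_segment (n : nat) (a b : R) :
  \sum_(t < n) ((a <= grid_pt t <= b)%R : bool)%:R <= N%:R * Num.max (b - a) 0 + 1.
Proof.
rewrite (eq_bigr (fun t : 'I_n =>
    (((a + A%:R) * N%:R - 2^-1 <= t%:R <= (b + A%:R) * N%:R - 2^-1)%R : bool)%:R)).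
  apply: le_trans (sum_indicator_segment _ _ _) _.
  have m0 : 0 <= Num.max (b - a) 0 by rewrite le_max lexx orbT.
  have m1 : b - a <= Num.max (b - a) 0 by rewrite le_max lexx.
  by rewrite ge_max; apply/andP; split; have := N_gt0R; nra.
move=> t _; rewrite /grid_pt lerBrDr ler_pdivlMr // lerBlDr ler_pdivrMr //.
by rewrite lerBlDr lerBrDr.
Qed.
End Grid.

Lemma prod_sum_indicator (R : comPzSemiRingType) (I : finType) (n : nat)
    (P : I -> 'I_n -> bool) :
  \prod_i \sum_(t < n) (P i t)%:R = \sum_(w : {ffun I -> 'I_n}) [forall i, P i (w i)]%:R :> R.
Proof.
rewrite bigA_distr_bigA; apply: eq_bigr => w _.
have [/forallP Pw | /forallPn [i Pwi]] := boolP [forall i, P i (w i)].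
  by rewrite big1 // => i _; rewrite Pw.
by rewrite (bigD1 i) //= (negbTE Pwi) mul0r.
Qed.

Lemma sumr_indicator_count (R : pzSemiRingType) (T : Type) (s : seq T) (P : pred T) :
  \sum_(x <- s) (P x)%:R = (count P s)%:R :> R.
Proof.
by rewrite -sum1_count natr_sum [RHS]big_mkcond; apply: eq_bigr => x _; case: (P x).
Qed.

Lemma ler_of_forall_invn (R : archiRealFieldType) (x y D : R) :
  0 <= D -> (forall M : nat, x <= y + D / M.+1%:R) -> x <= y.
Proof.
move=> D0 xyD; apply/ler_addgt0Pr => e e0.
pose M := Num.truncn (D / e); have : D / e < M.+1%:R by apply: truncnS_gt.
rewrite ltr_pdivrMr // => DeM; apply: le_trans (xyD M) _; rewrite lerD2l.
by rewrite ler_pdivrMr ?ltr0n // mulrC ltW.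
Qed.

Section GridCount.
Variables (R : realType) (d : nat).
Local Notation cube_set := (@cube_set R d).
Local Notation cubes_union := (@cubes_union R d).

Definition in_open_cube (Q : cube d) (x : 'I_d -> R) : bool :=
  [forall i, ((Q i).1%:~R < x i < (Q i).1%:~R + 1)%R].

Lemma in_open_cube_mem (Q : cube d) x :
  (forall i, (Q i).2) -> in_open_cube Q x -> cube_set Q x.
Proof.
move=> Qfull /forallP Qx i; move: (Qfull i) (Qx i); rewrite /elem_interval_set.
by case: (Q i) => l b /= -> /andP[lx xl]; rewrite intrD !ltW.
Qed.

Lemma in_open_cube_inj (Q Q' : cube d) x :
  (forall i, (Q i).2) -> (forall i, (Q' i).2) ->
  in_open_cube Q x -> in_open_cube Q' x -> Q = Q'.
Proof.
move=> Qfull Q'full /forallP Qx /forallP Q'x; apply/ffunP => i.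
move: (Qfull i) (Q'full i) (Qx i) (Q'x i).
case: (Q i) (Q' i) => l b [l' b'] /= -> -> /andP[lx xl] /andP[l'x xl'].
have : (l%:~R : R) < (l' + 1)%:~R by rewrite intrD; lra.
have : (l'%:~R : R) < (l + 1)%:~R by rewrite intrD; lra.
by rewrite !ltr_int => ? ?; congr pair; lia.
Qed.

Lemma count_in_open_cube_le1 (s : seq (cube d)) x :
  uniq s -> (forall Q, Q \in s -> forall i, (Q i).2) ->
  (count (in_open_cube^~ x) s <= 1)%N.
Proof.
move=> s_uniq s_full; rewrite -size_filter.
case es: [seq Q <- s | in_open_cube Q x] => [//|Q0 r]; rewrite -es.
apply: (@uniq_leq_size _ _ [:: Q0] (seq.filter_uniq _ s_uniq)) => Q.
have : Q0 \in [seq Q <- s | in_open_cube Q x] by rewrite es mem_head.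
rewrite !seq.mem_filter inE => /andP[Q0x Q0s] /andP[Qx Qs].
by apply/eqP; apply: in_open_cube_inj Qx Q0x; apply: s_full.
Qed.

Lemma count_in_open_cube_le_boxes (s : seq (cube d)) (K : nat)
    (C : nat -> ('I_d -> R) * ('I_d -> R)) x :
  uniq s -> (forall Q, Q \in s -> forall i, (Q i).2) ->
  (forall x, cubes_union s x -> exists2 k, (k < K)%N & box_set (C k) x) ->
  (count (in_open_cube^~ x) s)%:R <=
    \sum_(k < K) [forall i, (C k).1 i <= x i <= (C k).2 i]%:R :> R.
Proof.
move=> s_uniq s_full cover.
have [/hasP [Q Qs Qx] | no_cube] := boolP (has (in_open_cube^~ x) s); last first.
  move: no_cube; rewrite has_count -eqn0Ngt => /eqP ->.
  by rewrite sumr_ge0 // => k _; rewrite ler0n.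
have [k kK Ckx] := cover _ (ex_intro2 _ _ Q Qs (in_open_cube_mem (s_full Q Qs) Qx)).
rewrite (bigD1 (Ordinal kK)) //= (_ : [forall i, _] = true); last exact/forallP.
rewrite -[X in X <= _]addr0; apply: lerD; first by rewrite ler_nat count_in_open_cube_le1.
by apply: sumr_ge0 => k' _; rewrite ler0n.
Qed.

Definition box_side (B : ('I_d -> R) * ('I_d -> R)) (i : 'I_d) : R :=
  Num.max (B.2 i - B.1 i) 0.

Lemma grid_count_le (s : seq (cube d)) (K : nat) (C : nat -> ('I_d -> R) * ('I_d -> R))
    (A N : nat) :
  uniq s -> (forall Q, Q \in s -> forall i, (Q i).2) ->
  (forall Q, Q \in s -> forall i, (`|(Q i).1| + 1 <= A)%N) ->
  (forall x, cubes_union s x -> exists2 k, (k < K)%N & box_set (C k) x) ->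
  (0 < N)%N ->
  (size s)%:R * N%:R ^+ d <= \sum_(k < K) \prod_(i < d) (N%:R * box_side (C k) i + 1).
Proof.
move=> s_uniq s_full s_bnd cover N_gt0; pose n := (2 * A * N)%N.
pose x (w : {ffun 'I_d -> 'I_n}) i := @grid_pt R N A (w i).
pose in_box k (w : {ffun 'I_d -> 'I_n}) := [forall i, (C k).1 i <= x w i <= (C k).2 i].
have -> : (size s)%:R * N%:R ^+ d = \sum_w (count (in_open_cube^~ (x w)) s)%:R :> R.
  transitivity (\sum_(Q <- s) \sum_w (in_open_cube Q (x w))%:R : R).
    rewrite -sum1_size natr_sum mulr_suml; apply: eq_big_seq => Q Qs.
    rewrite mul1r (_ : N%:R ^+ d = \prod_(i < d) \sum_(t < n)
        (((Q i).1%:~R < @grid_pt R N A t < (Q i).1%:~R + 1)%R : bool)%:R).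
      exact: prod_sum_indicator.
    transitivity (\prod_(i < d) (N%:R : R)); first by rewrite prodr_const card_ord.
    by apply: eq_bigr => i _; rewrite sum_grid_open_unit ?s_bnd.
  by rewrite exchange_big; apply: eq_bigr => w _; apply: sumr_indicator_count.
apply: le_trans (_ : \sum_w \sum_(k < K) (in_box k w)%:R <= _ :> R).
  by apply: ler_sum => w _; apply: count_in_open_cube_le_boxes s_uniq s_full cover.
rewrite exchange_big; apply: ler_sum => k _.
rewrite (_ : \sum_w _ = \prod_(i < d) \sum_(t < n)
    (((C k).1 i <= @grid_pt R N A t <= (C k).2 i)%R : bool)%:R); last first.
  by rewrite prod_sum_indicator.
apply: ler_prod => i _; rewrite sumr_ge0 => [|t _]; last by rewrite ler0n.
exact: sum_grid_segment.
Qed.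

Lemma finite_box_cover_vol_ge (s : seq (cube d)) (K : nat)
    (C : nat -> ('I_d -> R) * ('I_d -> R)) :
  uniq s -> (forall Q, Q \in s -> forall i, (Q i).2) ->
  (forall x, cubes_union s x -> exists2 k, (k < K)%N & box_set (C k) x) ->
  (size s)%:R <= \sum_(k < K) box_vol (C k).
Proof.
move=> s_uniq s_full cover; pose A := \max_(Q <- s) \max_(i < d) (`|(Q i).1| + 1)%N.
have s_bnd Q : Q \in s -> forall i, (`|(Q i).1| + 1 <= A)%N.
  move=> Qs i; apply: leq_trans (_ : \max_(j < d) (`|(Q j).1| + 1) <= _)%N.
    exact: (@leq_bigmax _ (fun j => `|(Q j).1| + 1)%N).
  exact: (@leq_bigmax_seq _ _ _ (fun Q : cube d => \max_(j < d) (`|(Q j).1| + 1))%N _ Qs isT).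
have side_ge0 k i : 0 <= box_side (C k) i by rewrite le_max lexx orbT.
apply: (@ler_of_forall_invn _ _ _ (\sum_(k < K) \prod_(i < d) (box_side (C k) i + 2))).
  by apply: sumr_ge0 => k _; apply: prodr_ge0 => i _; have := side_ge0 k i; lra.
move=> M; have N_gt0 : (0 : R) < M.+1%:R by rewrite ltr0n.
have := grid_count_le s_uniq s_full s_bnd cover (ltn0Sn M).
under eq_bigr => k _.
  rewrite (eq_bigr (fun i => M.+1%:R * (box_side (C k) i + M.+1%:R^-1))); last first.
    by move=> i _; rewrite mulrDr mulfV ?gt_eqF.
  rewrite big_split /= prodr_const card_ord.
  over.
rewrite -mulr_sumr mulrC ler_pM2l ?exprn_gt0 // => /le_trans; apply.
rewrite mulrC mulr_sumr -big_split /=; apply: ler_sum => k _.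
apply: prod_perturb_le => //; rewrite invr_ge0 ltW //=.
by rewrite invf_le1 // ler1n.
Qed.
End GridCount.

(* Declared again after importing [ArrowAsProduct], so that HB also builds the
   pointed topological structure of ['I_d -> R] required by [compact_cover]. *)
HB.instance Definition _ (R : realType) (d : nat) := Pointed.on ('I_d -> R).

Section Compactness.
Variables (R : realType) (d : nat).
Local Notation cube_set := (@cube_set R d).
Local Notation cubes_union := (@cubes_union R d).

Definition open_box (B : ('I_d -> R) * ('I_d -> R)) : set ('I_d -> R) :=
  [set x | forall i, B.1 i < x i < B.2 i].

Lemma open_open_box (B : ('I_d -> R) * ('I_d -> R)) : open (open_box B).
Proof.
have -> : open_box B = \big[setI/setT]_(i <- enum 'I_d) (proj i @^-1` `]B.1 i, B.2 i[).
  rewrite -bigcap_seq; apply/seteqP; split=> x /= xB i => [_|]; last first.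
    by have := xB i; rewrite /= mem_enum in_itv => /(_ isT).
  by rewrite /proj /= in_itv; apply: xB.
apply: big_ind => //; [exact: openT | exact: openI | move=> i _].
by apply: open_comp; [move=> x _; apply: proj_continuous | apply: itv_open].
Qed.

Lemma compact_cube (Q : cube d) : compact (cube_set Q).
Proof.
pose Qi i := `[((Q i).1%:~R : R), ((Q i).1 + (Q i).2)%:~R]%classic.
have -> : cube_set Q = [set x | forall i, Qi i (x i)].
  by apply/seteqP; split=> x /= Qx i; have := Qx i; rewrite /Qi /= in_itv.
by apply: (@tychonoff _ (fun=> R : topologicalType) Qi) => i; apply: segment_compact.
Qed.

Lemma compact_cubes_union (s : seq (cube d)) : compact (cubes_union s).
Proof.
have -> : cubes_union s = \big[setU/set0]_(Q <- s) cube_set Q by rewrite -bigcup_seq.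
by apply: bigsetU_compact => Q _; apply: compact_cube.
Qed.

Lemma compact_open_box_cover (Z : set ('I_d -> R)) (C : nat -> ('I_d -> R) * ('I_d -> R)) :
  compact Z -> Z `<=` \bigcup_k open_box (C k) ->
  exists K, forall x, Z x -> exists2 k, (k < K)%N & box_set (C k) x.
Proof.
rewrite compact_cover => Zc ZC.
have [F _ ZF] := Zc nat setT (fun k => open_box (C k)) (fun k _ => open_open_box _) ZC.
exists (\max_(k <- F) k).+1 => x /ZF [k kF xk]; exists k.
  by rewrite ltnS (@leq_bigmax_seq _ _ xpredT id).
by move=> i; have /andP[? ?] := xk i; rewrite !ltW.
Qed.
End Compactness.

Section OuterMeasure.
Variables (R : realType) (d : nat).
Local Notation cubes_union := (@cubes_union R d).

Definition widen_box (t : R) (B : ('I_d -> R) * ('I_d -> R)) :=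
  (fun i => B.1 i - t / 2, fun i => B.2 i + t / 2).

Lemma box_sub_open_widen_box (t : R) B :
  0 < t -> box_set B `<=` open_box (widen_box t B).
Proof.
move=> t0 x Bx i; have /andP[? ?] := Bx i.
by rewrite /widen_box /=; apply/andP; split; lra.
Qed.

Lemma box_vol_widen_box (t : R) B : 0 <= t <= 1 ->
  box_vol (widen_box t B) <= box_vol B + t * \prod_i (box_side B i + 2).
Proof.
move=> t01; have side_ge0 i : 0 <= box_side B i by rewrite le_max lexx orbT.
apply: le_trans (prod_perturb_le _ side_ge0 t01).
apply: ler_prod => i _; rewrite ge_max le_max lexx orbT /=.
have : B.2 i - B.1 i <= box_side B i by rewrite le_max lexx.
by have := side_ge0 i; move: t01 => /andP[? _] ? ?; apply/andP; split; lra.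
Qed.

Lemma lebesgue_outer_ge_size (s : seq (cube d)) :
  uniq s -> (forall Q, Q \in s -> forall i, (Q i).2) ->
  (((size s)%:R : R)%:E <= lebesgue_outer (cubes_union s))%E.
Proof.
move=> s_uniq s_full; apply/ereal_infP => _ [B sB <-]; apply/lee_addgt0Pr => e e0.
(* The k-th box is enlarged at a cost of at most e / 2^(k+1) in volume. *)
pose eta := geometric (e / 2) (2^-1 : R).
have eta_gt0 k : 0 < eta k by rewrite /eta /= mulr_gt0 ?divr_gt0 ?exprn_gt0.
pose D k := \prod_i (box_side (B k) i + 2).
have side_ge0 k i : 0 <= box_side (B k) i by rewrite le_max lexx orbT.
have D_gt0 k : 0 < D k by apply: prodr_gt0 => i _; have := side_ge0 k i; lra.
pose t k := Num.min 1 (eta k / D k).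
have t_gt0 k : 0 < t k by rewrite lt_min ltr01 divr_gt0.
have t01 k : 0 <= t k <= 1 by rewrite ltW // ge_min lexx.
have tD k : t k * D k <= eta k by rewrite -ler_pdivlMr // ge_min lexx orbT.
have : cubes_union s `<=` \bigcup_k open_box (widen_box (t k) (B k)).
  by move=> x /sB [k _ Bkx]; exists k => //; apply: box_sub_open_widen_box.
move=> /(compact_open_box_cover (@compact_cubes_union _ _ s)) [K cover].
have : (size s)%:R <= \sum_(k < K) box_vol (B k) + e.
  apply: le_trans (finite_box_cover_vol_ge s_uniq s_full cover) _.
  apply: le_trans (_ : _ <= \sum_(k < K) (box_vol (B k) + eta k)) _.
    apply: ler_sum => k _; apply: le_trans (box_vol_widen_box _ (t01 k)) _.
    by rewrite lerD2l.
  rewrite big_split lerD2l /= -(big_mkord xpredT eta).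
  have := @geometric_le_lim R K (e / 2) 2^-1.
  have -> : e / 2 * (1 - 2^-1)^-1 = e by field.
  by apply; rewrite ?divr_ge0 ?ltW ?gtr0_norm ?invf_lt1 ?ltr1n.
rewrite -lee_fin EFinD => /le_trans; apply; rewrite leeD2r // -sumEFin.
rewrite -(big_mkord xpredT (fun k => (box_vol (B k))%:E)).
apply: nneseries_lim_ge => k _ _; rewrite lee_fin.
by apply: prodr_ge0 => i _; apply: side_ge0.
Qed.
End OuterMeasure.

Lemma full_of_cube_dim (d : nat) (Q : cube d) : cube_dim Q = d -> forall i, (Q i).2.
Proof.
move=> Qdim; have : #|[set i | (Q i).2]| = #|'I_d| by rewrite card_ord.
move=> /subset_cardP/(_ (subset_predT _)) Qfull i.
by have := Qfull i; rewrite inE => /set_mem.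
Qed.

Lemma cubes_union_undup (R : realType) (d : nat) (s : seq (cube d)) :
  @cubes_union R d (undup s) = cubes_union s.
Proof.
by apply/seteqP; split=> x [Q]; rewrite ?mem_undup => Qs Qx; exists Q; rewrite ?mem_undup.
Qed.

Theorem lemma3p2 (R : realType) (d : nat) (X Y : set ('I_d -> R))
  (Qs : seq (cube d)) :
  cubical X -> cubical Y -> X `<=` Y ->
  (forall Q, Q \in Qs -> cube_dim Q = d) ->
  Y `\` X `<=` @cubes_union R d Qs ->
  (((ncubes Y)%:R - (ncubes X)%:R : R)%:E
     <= ((3 ^ d)%:R : R)%:E * lebesgue_outer (@cubes_union R d Qs))%E.
Proof.
move=> cX cY _ Qs_dim YXQs; rewrite -cubes_union_undup in YXQs *.
have Qs_full Q : Q \in undup Qs -> forall i, (Q i).2.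
  by rewrite mem_undup => /Qs_dim /full_of_cube_dim.
apply: le_trans (_ : _ <= ((3 ^ d)%:R)%:E * ((size (undup Qs))%:R)%:E)%E _.
  by rewrite -EFinM lee_fin lerBlDl -natrM -natrD ler_nat mulnC ncubes_diff_le.
apply: lee_wpmul2l; first by rewrite lee_fin ler0n.
exact: lebesgue_outer_ge_size (undup_uniq Qs) Qs_full.
Qed.
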